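(* Let $V$ be a finite-dimensional real vector space and $X\subseteq V$ a finite or countable set in which every $2$-dimensional linear subset has fundamental vectors, equipped with a suitable ordering $\gamma_1,\gamma_2,\ldots$ with initial segments $X_i=\{\gamma_1,\ldots,\gamma_i\}$. Let $X_m$ be an initial segment and let $U$ be biclosed in $X_m$. Let $\overline{U}$ be the closure of $U$ in $X$. Then $\overline{U}\cap X_m=U$.
   Context: $\mathrm{Span}_+$ denotes nonnegative linear combinations. For $Y\subseteq X$, $B\subseteq Y$: closed in $Y$ if $\alpha,\beta\in B$, $\gamma\in\mathrm{Span}_+(\alpha,\beta)\cap Y$ imply $\gamma\in B$; coclosed if $Y\setminus B$ closed; biclosed if both; weakly separable if $\mathrm{Span}_+(B)\cap\mathrm{Span}_+(Y\setminus B)=\{0\}$; $Y$ is clean if every biclosed subset of $Y$ is weakly separable in $Y$. The closure of $U$ in $X$ is the smallest closed subset of $X$ containing $U$. A linear subset is $X\cap L$ for a subspace $L$. A $2$-dimensional linear subset $Y$ has fundamental vectors $\alpha,\beta\in Y$ if $Y\subseteq\mathrm{Span}_+\{\alpha,\beta\}$ and neither $\alpha$ nor $\beta$ lies in the nonnegative span of the other elements of $Y$. $F\subseteq X$ is full if $F\cap\mathrm{Span}\{\alpha,\beta\}=X\cap\mathrm{Span}\{\alpha,\beta\}$ for all $\alpha,\beta\in F$. An ordering is suitable if (1) in every $2$-dimensional linear subset the fundamental vectors precede all its other vectors, and (2) for every $i$ and $\alpha,\beta,\gamma\in X_i$ there is a full $F\subseteq X$ containing them with $F\cap X_i$ clean.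 *)

(* V = 'rV[R]_n with R : realType (a finite-dimensional real
   vector space, up to isomorphism). Subsets of V are predicates V -> Prop. *)
From HB Require Import structures.
From mathcomp Require Import all_boot all_order all_algebra.
From mathcomp Require Import reals.
Set Implicit Arguments. Unset Strict Implicit. Unset Printing Implicit Defensive.
Import Order.TTheory GRing.Theory Num.Theory.
Local Open Scope ring_scope.

Section Defs.
Variables (R : realType) (n : nat).
Notation V := 'rV[R]_n.

Definition pspan (B : V -> Prop) (v : V) : Prop :=
  exists (k : nat) (w : 'I_k -> V) (c : 'I_k -> R),
    (forall i, B (w i)) /\ (forall i, 0 <= c i) /\ v = \sum_(i < k) c i *: w i.

Definition pspan2 (a b v : V) : Prop :=
  exists c d : R, 0 <= c /\ 0 <= d /\ v = c *: a + d *: b.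

Definition lspan2 (a b : V) : {vspace V} := (<[a]> + <[b]>)%VS.

Definition subsetP (B Y : V -> Prop) := forall v, B v -> Y v.
Definition setDP (Y B : V -> Prop) (v : V) := Y v /\ ~ B v.

Definition closed_in (Y B : V -> Prop) : Prop :=
  subsetP B Y /\
  forall a b g, B a -> B b -> Y g -> pspan2 a b g -> B g.
Definition coclosed_in (Y B : V -> Prop) : Prop :=
  subsetP B Y /\ closed_in Y (setDP Y B).
Definition biclosed_in (Y B : V -> Prop) : Prop :=
  closed_in Y B /\ coclosed_in Y B.

Definition weakly_separable_in (Y B : V -> Prop) : Prop :=
  forall v, pspan B v -> pspan (setDP Y B) v -> v = 0.

Definition clean (Y : V -> Prop) : Prop :=
  forall B, biclosed_in Y B -> weakly_separable_in Y B.

Definition closure_in (X U : V -> Prop) (v : V) : Prop :=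
  forall C, closed_in X C -> subsetP U C -> C v.

Definition lin2_subset (X Y : V -> Prop) : Prop :=
  exists a b, Y a /\ Y b /\ \dim (lspan2 a b) = 2%N /\
    forall v, Y v <-> (X v /\ v \in lspan2 a b).

Definition setD1P (Y : V -> Prop) (a v : V) := Y v /\ v <> a.

Definition fundamental (Y : V -> Prop) (a b : V) : Prop :=
  Y a /\ Y b /\ (forall v, Y v -> pspan2 a b v) /\
  ~ pspan (setD1P Y a) a /\ ~ pspan (setD1P Y b) b.

Definition full (X F : V -> Prop) : Prop :=
  subsetP F X /\
  forall a b, F a -> F b ->
    forall v, (F v /\ v \in lspan2 a b) <-> (X v /\ v \in lspan2 a b).

(* Enumerations: X = {gamma j | valid j}, with valid j := j < N if
   len = Some N (finite X), or always if len = None (countably infinite X).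
   Indices are 0-based: X_i = {gamma j | j < i}. *)
Definition valid (len : option nat) (j : nat) : bool :=
  if len is Some N then (j < N)%N else true.

Definition Xset (gamma : nat -> V) (len : option nat) (v : V) : Prop :=
  exists j, valid len j /\ v = gamma j.

Definition Xseg (gamma : nat -> V) (len : option nat) (i : nat) (v : V) : Prop :=
  exists j, valid len j /\ (j < i)%N /\ v = gamma j.

Definition suitable (gamma : nat -> V) (len : option nat) : Prop :=
  (forall Y, lin2_subset (Xset gamma len) Y ->
     forall i j k, valid len i -> valid len j -> valid len k ->
       fundamental Y (gamma i) (gamma j) -> Y (gamma k) ->
       gamma k <> gamma i -> gamma k <> gamma j ->
       (i < k)%N /\ (j < k)%N) /\
  (forall i a b c, Xseg gamma len i a -> Xseg gamma len i b -> Xseg gamma len i c ->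
     exists F, full (Xset gamma len) F /\ F a /\ F b /\ F c /\
       clean (fun v => F v /\ Xseg gamma len i v)).

End Defs.

From Pilot Require Import Defs.
From HB Require Import structures.
From mathcomp Require Import all_boot all_order all_algebra.
From mathcomp Require Import reals boolp.
From mathcomp Require Import ring lra zify.
Import Order.TTheory GRing.Theory Num.Theory.
Local Open Scope ring_scope.
Set Implicit Arguments. Unset Strict Implicit. Unset Printing Implicit Defensive.

(* Extend [U] along the enumeration: [gamma k] joins the current biclosed
   subset [W] of [X_k] exactly when it lies in the cone of two elements of [W].
   The result stays biclosed in [X_(k+1)] for two reasons.  By suitability (2),
   cleanliness forbids a nonzero vector of [X] to lie both in a cone of two
   elements of [W] and in a cone of two elements of [X_k \ W].  By suitability
   (1), the fundamental vectors of a plane through two vectors of [X_k] lie in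
   [X_k], so a cone pivoting through [gamma k] can be swung onto [X_k].  The
   union of the extensions is closed in [X] and meets [X_m] in [U].
   The zero vector lies in every cone, so the extension cannot pass it.  If it
   lies in [X_m], then [U] is empty or all of [X_m]; if [X] spans at most a
   plane, Caratheodory's theorem in the plane suffices; otherwise all vectors
   enumerated after the zero vector are positive multiples of one another, and
   adding them (when they lie in a cone of the extension) and [0] to the
   extension up to the zero vector already gives a closed set. *)

Lemma opposite_signs (R : realDomainType) (s t x y : R) : 0 < s -> 0 < t ->
  s * x + t * y = 0 -> x != 0 -> (x < 0 < y) \/ (y < 0 < x).
Proof.
move=> hs ht e x0; case: (ltgtP x 0) => hx; last by rewrite hx eqxx in x0.
  by left; apply/andP; split=> //; nra.
by right; apply/andP; split=> //; nra.
Qed.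

Lemma ratio_shift_lt (R : realFieldType) (mu nu x y : R) : 0 < y -> mu < 0 -> 0 < nu ->
  (mu * x + nu) / (mu * y) < x / y.
Proof.
move=> y0 mu0 nu0.
have -> : (mu * x + nu) / (mu * y) = x / y + nu / (mu * y).
  by field; rewrite lt0r_neq0 // ltr0_neq0.
by rewrite gtrDl ltr_ndivrMr ?mul0r // pmulr_llt0.
Qed.

Section Cones.
Variables (R : realType) (n : nat).
Local Notation V := 'rV[R]_n.
Implicit Types (a b c d g p q u v w x al be : V) (B S : V -> Prop).

Lemma pspan2E a b (s t : R) : 0 <= s -> 0 <= t -> pspan2 a b (s *: a + t *: b).
Proof. by move=> hs ht; exists s, t. Qed.

Lemma pspan2C a b g : pspan2 a b g -> pspan2 b a g.
Proof. by case=> s [t [hs [ht ->]]]; rewrite addrC; apply: pspan2E. Qed.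

Lemma pspan2Z a b g (k : R) : 0 <= k -> pspan2 a b g -> pspan2 a b (k *: g).
Proof.
move=> hk [s [t [hs [ht ->]]]]; rewrite scalerDr !scalerA.
by apply: pspan2E; apply: mulr_ge0.
Qed.

Lemma pspan2_l a b (k : R) : 0 <= k -> pspan2 a b (k *: a).
Proof. by move=> hk; rewrite -[k *: a]addr0 -(scale0r b); apply: pspan2E. Qed.

Lemma pspan2_id_l a b : pspan2 a b a.
Proof. by have := pspan2_l a b ler01; rewrite scale1r. Qed.

Lemma pspan2_id_r a b : pspan2 a b b.
Proof. by apply: pspan2C; apply: pspan2_id_l. Qed.

Lemma pspan2_0 a b : pspan2 a b 0.
Proof. by rewrite -(scale0r a); apply: pspan2_l. Qed.

Lemma pspan2_0r a g : pspan2 a 0 g -> pspan2 a a g.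
Proof. by case=> s [t [hs [_ ->]]]; rewrite scaler0 addr0; apply: pspan2_l. Qed.

Lemma pspan2_ray a g : g <> 0 -> pspan2 a a g -> pspan2 g g a.
Proof.
move=> g0 [s [t [hs [ht]]]]; rewrite -scalerDl => eg.
have st0 : s + t != 0 by apply: contra_notN g0 => /eqP st0; rewrite eg st0 scale0r.
have -> : a = (s + t)^-1 *: g by rewrite eg scalerA mulVf // scale1r.
by apply: pspan2_l; rewrite invr_ge0 addr_ge0.
Qed.

Lemma pspan2_trans al be a b g :
  pspan2 al be a -> pspan2 al be b -> pspan2 a b g -> pspan2 al be g.
Proof.
move=> [a1 [a2 [ha1 [ha2 ->]]]] [b1 [b2 [hb1 [hb2 ->]]]] [s [t [hs [ht ->]]]].
have -> : s *: (a1 *: al + a2 *: be) + t *: (b1 *: al + b2 *: be) =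
          (s * a1 + t * b1) *: al + (s * a2 + t * b2) *: be.
  by rewrite !scalerDr !scalerA !scalerDl addrACA.
by apply: pspan2E; apply: addr_ge0; apply: mulr_ge0.
Qed.

Lemma pspan1 B a : B a -> pspan B a.
Proof.
by move=> Ba; exists 1%N, (fun=> a), (fun=> 1); rewrite big_ord1 scale1r.
Qed.

Lemma pspan0 B : pspan B 0.
Proof. by exists 0%N, (fun=> 0), (fun=> 0); rewrite big_ord0; split=> [[]|]. Qed.

Lemma pspan_conic B a b (s t : R) : 0 <= s -> 0 <= t ->
  pspan B a -> pspan B b -> pspan B (s *: a + t *: b).
Proof.
move=> hs ht [k1 [w1 [c1 [hw1 [hc1 ->]]]]] [k2 [w2 [c2 [hw2 [hc2 ->]]]]].
exists (k1 + k2)%N, (fun i => match split i with inl j => w1 j | inr j => w2 j end).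
exists (fun i => match split i with inl j => s * c1 j | inr j => t * c2 j end).
split; first by move=> i; case: (split i).
split; first by move=> i; case: (split i) => j; apply: mulr_ge0.
rewrite big_split_ord !scaler_sumr; congr (_ + _); apply: eq_bigr => i _.
  by rewrite (unsplitK (inl i : 'I_k1 + 'I_k2)) scalerA.
by rewrite (unsplitK (inr i : 'I_k1 + 'I_k2)) scalerA.
Qed.

Lemma pspanZ B a (k : R) : 0 <= k -> B a -> pspan B (k *: a).
Proof.
move=> hk Ba; have := pspan_conic hk (lexx 0) (pspan1 Ba) (pspan1 Ba).
by rewrite scale0r addr0.
Qed.

Lemma pspan_pspan2 B a b g : B a -> B b -> pspan2 a b g -> pspan B g.
Proof. by move=> Ba Bb [s [t [hs [ht ->]]]]; apply: pspan_conic => //; apply: pspan1. Qed.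

Lemma memv_lspan2 a b (s t : R) : s *: a + t *: b \in lspan2 a b.
Proof. by apply: memv_add; rewrite memvZ // memv_line. Qed.

Lemma lspan2_l a b : a \in lspan2 a b.
Proof. by have := memv_lspan2 a b 1 0; rewrite scale1r scale0r addr0. Qed.

Lemma lspan2_r a b : b \in lspan2 a b.
Proof. by have := memv_lspan2 a b 0 1; rewrite scale1r scale0r add0r. Qed.

Lemma pspan2_lspan2 a b g : pspan2 a b g -> g \in lspan2 a b.
Proof. by case=> s [t [_ [_ ->]]]; apply: memv_lspan2. Qed.

Lemma lspan2_comb a b v : v \in lspan2 a b -> exists s t, v = s *: a + t *: b.
Proof. by case/memv_addP=> _ /vlineP[s ->] [_ /vlineP[t ->] ->]; exists s, t. Qed.

Lemma lspan2C a b : lspan2 a b = lspan2 b a.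
Proof. by rewrite /lspan2 addvC. Qed.

Lemma lspan2_span a b : lspan2 a b = <<[:: a; b]>>%VS.
Proof. by rewrite /lspan2 span_cons span_seq1. Qed.

Lemma dim_lspan2_le2 a b : (\dim (lspan2 a b) <= 2)%N.
Proof. by rewrite lspan2_span; apply: dim_span. Qed.

Lemma dim_lspan2 a b : b != 0 -> a \notin <[b]>%VS -> \dim (lspan2 a b) = 2%N.
Proof.
move=> b0 ab; rewrite lspan2_span; apply/eqP.
by rewrite [_ == _](_ : _ = free [:: a; b]) // free_cons span_seq1 ab seq1_free.
Qed.

Lemma lspan2_exchange a b c (s t : R) : t != 0 -> c = s *: a + t *: b ->
  b \in lspan2 c a.
Proof.
move=> t0 ec; have -> : b = t^-1 *: c + (- (t^-1 * s)) *: a.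
  by rewrite ec scalerDr !scalerA mulVf // scale1r scaleNr addrC addKr.
exact: memv_lspan2.
Qed.

Lemma scalar_lin2 (phi : {scalar V}) a b (s t : R) :
  phi (s *: a + t *: b) = s * phi a + t * phi b.
Proof. by rewrite linearD !linearZ. Qed.

Lemma lspan2_dual q g1 g2 : g1 != 0 -> g2 \notin <[g1]>%VS -> q \notin lspan2 g1 g2 ->
  exists h t : {scalar V}, [/\ h q = 1, h g1 = 0, h g2 = 0, t g1 = 0 & t g2 = 1].
Proof.
move=> g10 g21 q12; pose T : 3.-tuple V := [tuple q; g2; g1].
have freeT : free T.
  by rewrite /= free_cons free_cons seq1_free -lspan2_span lspan2C span_seq1 q12 g21.
exists (coord T 0), (coord T 1).
by split; [ have := coord_free 0 0 freeT | have := coord_free 2 0 freeT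
          | have := coord_free 1 0 freeT | have := coord_free 2 1 freeT
          | have := coord_free 1 1 freeT ].
Qed.

Lemma notin_vline_scalar (phi : {scalar V}) w x :
  phi w = 0 -> phi x != 0 -> x \notin <[w]>%VS.
Proof. by move=> hw; apply: contra => /vlineP[k ->]; rewrite linearZ /= hw mulr0. Qed.

Lemma pspan2_pivot_l al a b g : g <> 0 ->
  pspan2 al b a -> pspan2 a b g -> pspan2 al g a.
Proof.
move=> g0 [x [y [hx [hy ea]]]] [p [q [hp [hq eg]]]].
have {}eg : g = (p * x) *: al + (p * y + q) *: b.
  by rewrite eg ea scalerDr !scalerA -addrA -scalerDl.
have [K0|] := ltrP 0 (p * y + q).
  exists (x * q / (p * y + q)), (y / (p * y + q)); rewrite !divr_ge0 ?mulr_ge0 ?(ltW K0) //.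
  do 2 split=> //; rewrite eg scalerDr !scalerA addrA -scalerDl ea mulrAC divfK ?gt_eqF //.
  by congr (_ *: _ + _); field; rewrite gt_eqF.
move=> K0; have : p * y + q == 0 by rewrite eq_le K0 addr_ge0 ?mulr_ge0.
rewrite paddr_eq0 ?mulr_ge0 // mulf_eq0 => /andP[/orP[/eqP p0|/eqP y0] /eqP q0].
  by case: g0; rewrite eg p0 q0 !mul0r add0r !scale0r addr0.
by rewrite ea y0 scale0r addr0; apply: pspan2_l.
Qed.

Lemma pspan2_split al be a b : b <> 0 ->
  pspan2 al be a -> pspan2 al be b -> pspan2 al b a \/ pspan2 be b a.
Proof.
suff side al' be' (a1 a2 b1 b2 : R) : 0 <= a1 -> 0 <= a2 -> 0 <= b1 -> 0 <= b2 ->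
    a2 * b1 <= a1 * b2 -> b1 *: al' + b2 *: be' <> 0 ->
    pspan2 al' (b1 *: al' + b2 *: be') (a1 *: al' + a2 *: be').
  move=> b0 [a1 [a2 [ha1 [ha2 ->]]]] [b1 [b2 [hb1 [hb2 eb]]]]; rewrite eb in b0 *.
  have [det|det] := lerP (a2 * b1) (a1 * b2); first by left; apply: side.
  right; rewrite (addrC (a1 *: al)) (addrC (b1 *: al)).
  by apply: side; rewrite 1?addrC // ltW.
move=> ha1 ha2 hb1 hb2 det b0; have [b2p|] := ltrP 0 b2.
  exists (a1 - a2 * b1 / b2), (a2 / b2); rewrite divr_ge0 ?(ltW b2p) //; split.
    by rewrite subr_ge0 ler_pdivrMr.
  split=> //; rewrite scalerDr !scalerA addrA -scalerDl.
  by congr (_ *: _ + _ *: _); field; rewrite gt_eqF.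
move=> b2n; have b20 : b2 = 0 by apply/eqP; rewrite eq_le b2n.
have b1n : b1 != 0 by apply: contra_notN b0 => /eqP b10; rewrite b10 b20 !scale0r addr0.
have a20 : a2 = 0.
  move: det; rewrite b20 mulr0 => det.
  have : a2 * b1 == 0 by rewrite eq_le det mulr_ge0.
  by rewrite mulf_eq0 (negbTE b1n) orbF => /eqP.
by rewrite a20 scale0r addr0; apply: pspan2_l.
Qed.

Lemma pspan2_pivot al be a b g : b <> 0 -> g <> 0 ->
  pspan2 al be a -> pspan2 al be b -> pspan2 a b g ->
  (pspan2 al b g /\ pspan2 al g a) \/ (pspan2 be b g /\ pspan2 be g a).
Proof.
move=> b0 g0 ha hb hg.
have pivot e : pspan2 e b a -> pspan2 e b g /\ pspan2 e g a.
  move=> hea; split; first exact: (pspan2_trans hea (pspan2_id_r _ _) hg).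
  exact: (pspan2_pivot_l g0 hea hg).
by case: (pspan2_split b0 ha hb) => /pivot; [left | right].
Qed.

Lemma lspan2_dependent a0 b0 p q w :
  p \in lspan2 a0 b0 -> q \in lspan2 a0 b0 -> w \in lspan2 a0 b0 ->
  exists l1 l2 l3 : R, (0 < l1 \/ 0 < l2 \/ 0 < l3) /\ l1 *: p + l2 *: q + l3 *: w = 0.
Proof.
move=> hp hq hw; have : ~~ free [:: p; q; w].
  apply: contraTN (dim_lspan2_le2 a0 b0) => /eqP dim3; rewrite -ltnNge -[3%N]dim3.
  by apply: dimvS; apply/span_subvP => x; rewrite !inE => /or3P[] /eqP ->.
rewrite free_cons free_cons seq1_free !negb_and !negbK -lspan2_span span_seq1.
case/orP=> [/lspan2_comb[s [t ->]]|/orP[/vlineP[k ->]|/eqP ->]].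
- exists 1, (- s), (- t); split; first by left; exact: ltr01.
  by rewrite scale1r !scaleNr addrAC addrK subrr.
- exists 0, 1, (- k); split; first by right; left; exact: ltr01.
  by rewrite scale0r add0r scale1r scaleNr subrr.
- by exists 0, 0, 1; split; [right; right; exact: ltr01 | rewrite !scale0r !scaler0 !addr0].
Qed.

(* The index minimising coefficient / [l] among those with [0 < l],
   in cross-multiplied form. *)
Lemma min_ratio3 (l1 l2 l3 s t c : R) : 0 <= s -> 0 <= t -> 0 <= c ->
  0 < l1 \/ 0 < l2 \/ 0 < l3 ->
  [\/ [/\ 0 < l3, 0 < l1 -> c * l1 <= s * l3 & 0 < l2 -> c * l2 <= t * l3],
      [/\ 0 < l1, 0 < l2 -> s * l2 <= t * l1 & 0 < l3 -> s * l3 <= c * l1] |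
      [/\ 0 < l2, 0 < l1 -> t * l1 <= s * l2 & 0 < l3 -> t * l3 <= c * l2]].
Proof.
move=> hs ht hc hpos.
have [h1|h1] := lerP l1 0; have [h2|h2] := lerP l2 0; have [h3|h3] := lerP l3 0.
- by exfalso; lra.
- by constructor 1; split=> // hh; lra.
- by constructor 3; split=> // hh; lra.
- have [r|r] := lerP (c * l2) (t * l3); [constructor 1 | constructor 3];
    by split=> // hh; lra.
- by constructor 2; split=> // hh; lra.
- have [r|r] := lerP (c * l1) (s * l3); [constructor 1 | constructor 2];
    by split=> // hh; lra.
- have [r|r] := lerP (t * l1) (s * l2); [constructor 3 | constructor 2];
    by split=> // hh; lra.
- have [r13|r13] := lerP (c * l1) (s * l3); have [r23|r23] := lerP (c * l2) (t * l3).
  + by constructor 1.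
  + by constructor 3; split=> // _; [nra | lra].
  + by constructor 2; split=> // _; [nra | lra].
  + have [r|r] := lerP (t * l1) (s * l2); [constructor 3 | constructor 2];
      by split=> // hh; lra.
Qed.

Lemma pspan2_elim3 p q w x (l1 l2 l3 s t c : R) :
  0 <= s -> 0 <= t -> 0 <= c -> 0 < l3 ->
  (0 < l1 -> c * l1 <= s * l3) -> (0 < l2 -> c * l2 <= t * l3) ->
  l1 *: p + l2 *: q + l3 *: w = 0 -> x = s *: p + t *: q + c *: w -> pspan2 p q x.
Proof.
move=> hs ht hc h3 h1 h2 hrel ->.
have ew : w = (- (l3^-1 * l1)) *: p + (- (l3^-1 * l2)) *: q.
  rewrite -[w](scalerK (lt0r_neq0 h3)) -(addr0_eq hrel).
  by rewrite scalerN scalerDr !scalerA opprD -!scaleNr.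
have coef (l u : R) : 0 <= u -> (0 < l -> c * l <= u * l3) -> 0 <= u + c * - (l3^-1 * l).
  move=> hu hl; rewrite mulrN subr_ge0 mulrCA mulrC ler_pdivrMr //.
  have [lp|ln] := ltrP 0 l; first exact: hl.
  exact: le_trans (mulr_ge0_le0 hc ln) (mulr_ge0 hu (ltW h3)).
rewrite ew scalerDr !scalerA addrACA -!scalerDl.
by apply: pspan2E; apply: coef.
Qed.

Lemma pspan2_of3 a0 b0 p q w x (s t c : R) :
  p \in lspan2 a0 b0 -> q \in lspan2 a0 b0 -> w \in lspan2 a0 b0 ->
  0 <= s -> 0 <= t -> 0 <= c -> x = s *: p + t *: q + c *: w ->
  [\/ pspan2 p q x, pspan2 p w x | pspan2 q w x].
Proof.
move=> hp hq hw hs ht hc hx.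
have [l1 [l2 [l3 [hpos hrel]]]] := lspan2_dependent hp hq hw.
case: (min_ratio3 hs ht hc hpos) => -[hl h1 h2].
- by constructor 1; apply: (pspan2_elim3 hs ht hc hl h1 h2 hrel hx).
- constructor 3; apply: (pspan2_elim3 (w := p) ht hc hs hl h1 h2).
    by rewrite addrC addrA.
  by rewrite hx [RHS]addrC addrA.
- constructor 2; apply: (pspan2_elim3 (w := q) hs hc ht hl h1 h2).
    by rewrite addrAC.
  by rewrite hx addrAC.
Qed.

Lemma caratheodory_lspan2 a0 b0 S v : (forall w, S w -> w \in lspan2 a0 b0) ->
  pspan S v -> v = 0 \/ exists p q, [/\ S p, S q & pspan2 p q v].
Proof.
move=> hS [k [w [c [hw [hc ->]]]]]; elim: k w c hw hc => [|k IH] w c hw hc.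
  by left; rewrite big_ord0.
rewrite big_ord_recr /=; right.
have [->|[p [q [Sp Sq [s [t [hs [ht ->]]]]]]]] :=
  IH (w \o widen_ord (leqnSn k)) (c \o widen_ord (leqnSn k)) (fun=> hw _) (fun=> hc _).
  by exists (w ord_max), (w ord_max); rewrite add0r; split=> //; apply: pspan2_l.
have [h|h|h] := pspan2_of3 (hS _ Sp) (hS _ Sq) (hS _ (hw ord_max)) hs ht (hc ord_max) erefl.
- by exists p, q.
- by exists p, (w ord_max).
- by exists q, (w ord_max).
Qed.

End Cones.

Section Fundamental.
Variables (R : realType) (n : nat).
Local Notation V := 'rV[R]_n.
Implicit Types (a b c d g p q u v w x y al be : V) (B U W X Y : V -> Prop).

Lemma lin2_subset_sub X Y v : lin2_subset X Y -> Y v -> X v.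
Proof. by case=> a [b [_ [_ [_ /(_ v) [+ _]]]]] => /[apply] -[]. Qed.

Lemma fundamental_neq0 Y al be : fundamental Y al be -> al <> 0 /\ be <> 0.
Proof.
case=> _ [_ [_ [Nal Nbe]]]; split=> e0; [apply: Nal | apply: Nbe];
  by rewrite e0; apply: pspan0.
Qed.

Lemma fundamental_gt0 Y al be y : fundamental Y al be -> Y y -> y <> 0 ->
  y <> al -> y <> be -> exists s t : R, [/\ 0 < s, 0 < t & y = s *: al + t *: be].
Proof.
move=> [_ [_ [Ycone [Nal Nbe]]]] Yy y0 yal ybe.
have [s [t [hs [ht ey]]]] := Ycone y Yy.
have edge e f (k l : R) : 0 <= l -> y = k *: e + l *: f -> y <> f ->
    ~ pspan (Defs.setD1P Y f) f -> k != 0.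
  move=> hl eyk yf Nf; apply/eqP => k0; apply: Nf.
  rewrite k0 scale0r add0r in eyk.
  have l0 : l != 0 by apply: contra_notN y0 => /eqP l0; rewrite eyk l0 scale0r.
  have ef : f = l^-1 *: y by rewrite eyk scalerA mulVf // scale1r.
  by rewrite {2}ef; apply: pspanZ; [rewrite invr_ge0 | split].
exists s, t; rewrite !lt0r hs ht !andbT; split=> //.
  exact: edge ht ey ybe Nbe.
by apply: (edge be al t s hs _ yal Nal); rewrite addrC.
Qed.

Lemma lin2_subset_not_line X Y be : lin2_subset X Y -> ~ (forall y, Y y -> y \in <[be]>%VS).
Proof.
move=> [a [b [Ya [Yb [dim2 _]]]]] inline.
have sub : (lspan2 a b <= <[be]>)%VS by rewrite subv_add -!memvE !inline.
by have := dimvS sub; rewrite dim2 dim_vline; case: (be != 0).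
Qed.

Lemma fundamental_pointed X Y al be u : lin2_subset X Y -> fundamental Y al be ->
  pspan2 al be u -> pspan2 al be (- u) -> u = 0.
Proof.
move=> hY hF [c1 [c2 [hc1 [hc2 eu]]]] [d1 [d2 [hd1 [hd2 enu]]]].
have [_ be0] := fundamental_neq0 hF.
have [_ [_ [Ycone _]]] := hF.
have rel : (c1 + d1) *: al + (c2 + d2) *: be = 0.
  by rewrite !scalerDl addrACA -eu -enu subrr.
have e1 : c1 + d1 = 0.
  apply/eqP; apply/negPn/negP => e1; apply: (lin2_subset_not_line hY) => y /Ycone.
  have -> : al = (- ((c1 + d1)^-1 * (c2 + d2))) *: be.
    have ealt : (c1 + d1) *: al = - ((c2 + d2) *: be) by apply/eqP; rewrite -addr_eq0 rel.
    by rewrite -[al](scalerK e1) ealt scalerN scalerA scaleNr.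
  by case=> s [t [_ [_ ->]]]; rewrite scalerA -scalerDl; apply/memvZ/memv_line.
have e2 : c2 + d2 = 0.
  apply/eqP; move: rel; rewrite e1 scale0r add0r => /eqP.
  by rewrite scaler_eq0 => /orP[// | /eqP be0'].
move/eqP: e1; move/eqP: e2; rewrite !paddr_eq0 // => /andP[/eqP c20 _] /andP[/eqP c10 _].
by rewrite eu c10 c20 !scale0r addr0.
Qed.

End Fundamental.

Section Biclosed.
Variables (R : realType) (n : nat).
Local Notation V := 'rV[R]_n.
Implicit Types (a b c d g p q u v w x y : V) (B C U W X Y : V -> Prop).

Definition cone2 B v := exists a b, [/\ B a, B b & pspan2 a b v].

Lemma cone2_sub B v : B v -> cone2 B v.
Proof. by move=> Bv; exists v, v; split=> //; apply: pspan2_id_l. Qed.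

Lemma cone2Z B v (k : R) : 0 <= k -> cone2 B v -> cone2 B (k *: v).
Proof. by move=> hk [a [b [Ba Bb hv]]]; exists a, b; split=> //; apply: pspan2Z. Qed.

Lemma cone2_ray B a g : cone2 B a -> pspan2 a a g -> cone2 B g.
Proof.
by move=> [u1 [u2 [B1 B2 ha]]] hg; exists u1, u2; split=> //; apply: (pspan2_trans ha ha hg).
Qed.

Lemma closed_in_cone2 Y B v : closed_in Y B -> Y v -> cone2 B v -> B v.
Proof. by move=> [_ hB] Yv [a [b [Ba Bb hv]]]; apply: (hB _ _ _ Ba Bb Yv hv). Qed.

Lemma setDPK Y W : Defs.subsetP W Y -> Defs.setDP Y (Defs.setDP Y W) = W.
Proof.
move=> WY; apply/funext => v; apply/propext; split.
  by case=> Yv nn; apply: contrapT => nWv; apply: nn.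
by move=> Wv; split=> [|[_]]; [apply: WY | apply].
Qed.

Lemma biclosed_setD Y W : biclosed_in Y W -> biclosed_in Y (Defs.setDP Y W).
Proof. by move=> [cW [WY cD]]; split=> //; split; [move=> v [] | rewrite setDPK]. Qed.

Lemma biclosed_inI Y W F : biclosed_in Y W ->
  biclosed_in (fun v => F v /\ Y v) (fun v => W v /\ F v).
Proof.
move=> [[WY cW] [_ [_ cD]]]; split.
  split=> [v [Wv Fv] | a b g [Wa _] [Wb _] [Fg Yg] hg]; first by split; last exact: WY.
  by split; first exact: (cW _ _ _ Wa Wb Yg hg).
split=> [v [Wv Fv] | ]; first by split; last exact: WY.
split=> [v [] // | a b g [[Fa Ya] nBa] [[Fb Yb] nBb] [Fg Yg] hg]; split=> // -[Wg _].
have nW e : F e -> ~ (W e /\ F e) -> ~ W e by move=> Fe nBe We; apply: nBe.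
by case: (cD a b g (conj Ya (nW a Fa nBa)) (conj Yb (nW b Fb nBb)) Yg hg).
Qed.

Lemma biclosed_in_0 Y W : biclosed_in Y W -> Y 0 ->
  (forall v, ~ W v) \/ (forall v, Y v -> W v).
Proof.
move=> [[_ cW] [_ [_ cD]]] Y0; have [[u Wu]|] := pselect (exists u, W u); last first.
  by move=> noW; left => v Wv; apply: noW; exists v.
right => v Yv; apply: contrapT => nWv.
have [_ nW0] := cD v v 0 (conj Yv nWv) (conj Yv nWv) Y0 (pspan2_0 v v).
by apply: nW0; apply: (cW _ _ _ Wu Wu Y0 (pspan2_0 u u)).
Qed.

Lemma closure_in_sub X U v : U v -> closure_in X U v.
Proof. by move=> Uv C _; apply. Qed.

Lemma closure_in_empty X U v : (forall u, ~ U u) -> ~ closure_in X U v.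
Proof. by move=> noU hv; apply: (hv (fun=> False)) => //; split=> // u /noU. Qed.

Lemma closure_in_pspan X U v : Defs.subsetP U X -> closure_in X U v -> X v /\ pspan U v.
Proof.
move=> UX hv; apply: (hv (fun w => X w /\ pspan U w)); last first.
  by move=> u Uu; split; [apply: UX | apply: pspan1].
split=> [w [] // | a b g [_ Ua] [_ Ub] Xg [s [t [hs [ht eg]]]]].
by split=> //; rewrite eg; apply: pspan_conic.
Qed.

Lemma closure_in_lspan2 X Y U a0 b0 : (forall v, X v -> v \in lspan2 a0 b0) ->
  Defs.subsetP Y X -> closed_in Y U -> forall v, closure_in X U v -> Y v -> U v.
Proof.
move=> Xplane YX [UY cU] v hv Yv.
have UX u : U u -> X u by move/UY/YX.
have [Xv pv] := closure_in_pspan UX hv.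
have [v0|[p [q [Up Uq hpq]]]] := caratheodory_lspan2 (fun w Uw => Xplane w (UX w Uw)) pv.
  have [[u Uu]|noU] := pselect (exists u, U u).
    by rewrite v0 in Yv *; apply: (cU _ _ _ Uu Uu Yv (pspan2_0 u u)).
  by case: (closure_in_empty (fun u Uu => noU (ex_intro _ u Uu)) hv).
exact: (cU _ _ _ Up Uq Yv hpq).
Qed.

End Biclosed.

Section Ordering.
Variables (R : realType) (n : nat) (gamma : nat -> 'rV[R]_n) (len : option nat).
Hypothesis gamma_inj :
  forall i j, valid len i -> valid len j -> gamma i = gamma j -> i = j.
Hypothesis has_fund :
  forall Y, lin2_subset (Xset gamma len) Y -> exists a b, fundamental Y a b.
Hypothesis suit : suitable gamma len.
Local Notation V := 'rV[R]_n.
Local Notation X := (Xset gamma len).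
Local Notation Xs := (Xseg gamma len).
Implicit Types (a b c g p q u v w x y al be : V) (U W Y : V -> Prop).

Lemma Xset_gamma j : valid len j -> X (gamma j).
Proof. by exists j. Qed.

Lemma Xseg_Xset i v : Xs i v -> X v.
Proof. by case=> j [vj [_ ->]]; exists j. Qed.

Lemma Xseg_mono i k v : (i <= k)%N -> Xs i v -> Xs k v.
Proof.
by move=> ik [j [vj [ji ->]]]; exists j; split=> //; split=> //; apply: leq_trans ik.
Qed.

Lemma Xseg_index i j : valid len j -> Xs i (gamma j) -> (j < i)%N.
Proof. by move=> vj [k [vk [ki /(gamma_inj vj vk) ->]]]. Qed.

Lemma Xseg_argmin k (f : V -> R) (P : pred V) : (exists2 p0, Xs k p0 & P p0) ->
  exists p, [/\ Xs k p, P p & forall p', Xs k p' -> P p' -> f p <= f p'].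
Proof.
case=> _ [j0 [vj0 [j0k ->]]] Pj0.
pose Q := [pred i : 'I_k | valid len i && P (gamma i)].
have Q0 : Q (Ordinal j0k) by rewrite inE /= vj0 Pj0.
case: (arg_minP (fun i : 'I_k => f (gamma i)) Q0) => i /andP[vi Pi] imin.
exists (gamma i); split=> //; first by exists i.
by move=> _ [j [vj [jk ->]]] Pj; apply: (imin (Ordinal jk)); rewrite inE /= vj Pj.
Qed.

Lemma XsegS k v : Xs k.+1 v <-> Xs k v \/ (valid len k /\ v = gamma k).
Proof.
split=> [[j [vj [+ ->]]]|[[j [vj [jk ->]]]|[vk ->]]]; last by exists k.
  by rewrite ltnS leq_eqVlt => /orP[/eqP ejk | jk]; [right; rewrite -ejk | left; exists j].
by exists j; split=> //; split=> //; apply: ltnW.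
Qed.

Definition plane a b v := X v /\ v \in lspan2 a b.

Lemma plane_lin2_subset a b : X a -> X b -> b != 0 -> a \notin <[b]>%VS ->
  lin2_subset X (plane a b).
Proof.
move=> Xa Xb b0 ab; exists a, b; split; first by split=> //; apply: lspan2_l.
by split; [split=> //; apply: lspan2_r | split; [apply: dim_lspan2 | ]].
Qed.

Lemma fundamental_before Y al be j : lin2_subset X Y -> fundamental Y al be ->
  valid len j -> Y (gamma j) -> gamma j <> al -> gamma j <> be -> Xs j al /\ Xs j be.
Proof.
move=> hY hF vj Yj jal jbe; have [Yal [Ybe _]] := hF.
have [i [vi ei]] := lin2_subset_sub hY Yal.
have [k [vk ek]] := lin2_subset_sub hY Ybe.
rewrite ei ek in hF jal jbe *.
have [ij kj] := suit.1 Y hY i k j vi vk vj hF Yj jal jbe.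
by split; [exists i | exists k].
Qed.

Lemma fundamental_seg Y al be k y1 y2 : lin2_subset X Y -> fundamental Y al be ->
  Y y1 -> Y y2 -> y1 <> y2 -> Xs k y1 -> Xs k y2 -> Xs k al /\ Xs k be.
Proof.
move=> hY hF Y1 Y2 y12 X1 X2.
have inner y : Y y -> Xs k y -> y <> al -> y <> be -> Xs k al /\ Xs k be.
  move=> Yy [j [vj [jk ey]]]; rewrite ey in Yy * => yal ybe.
  have [al_j be_j] := fundamental_before hY hF vj Yy yal ybe.
  by split; apply: Xseg_mono (ltnW jk) _.
have [h1|/not_orP[]] := pselect (y1 = al \/ y1 = be); last exact: inner Y1 X1.
have [h2|/not_orP[]] := pselect (y2 = al \/ y2 = be); last exact: inner Y2 X2.
case: h1 h2 => e1 [] e2; try by case: y12; rewrite e1 e2.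
  by rewrite -e1 -e2.
by rewrite -e1 -e2.
Qed.

Lemma plane_pspan2_opp a b c : X a -> X b -> b != 0 -> a \notin <[b]>%VS ->
  X c -> c \in lspan2 a b -> pspan2 a b (- c) -> c = 0.
Proof.
move=> Xa Xb b0 ab Xc cab hc; have hY := plane_lin2_subset Xa Xb b0 ab.
have [al [be hF]] := has_fund hY; have [_ [_ [Ycone _]]] := hF.
apply: (fundamental_pointed hY hF (Ycone c (conj Xc cab))).
have Ya : plane a b a by split=> //; apply: lspan2_l.
have Yb : plane a b b by split=> //; apply: lspan2_r.
exact: (pspan2_trans (Ycone a Ya) (Ycone b Yb) hc).
Qed.

Lemma cone2_setD_eq0 i W y : biclosed_in (Xs i) W -> X y ->
  cone2 W y -> cone2 (Defs.setDP (Xs i) W) y -> y = 0.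
Proof.
move=> hW Xy [a [b [Wa Wb hab]]] [c [d [[Xc nWc] [Xd nWd] hcd]]].
have WXs : Defs.subsetP W (Xs i) by case: hW => [[]].
have [F [[_ fullF] [Fa [Fb [Fc cleanF]]]]] := suit.2 i a b c (WXs a Wa) (WXs b Wb) Xc.
have [Fy _] := (fullF a b Fa Fb y).2 (conj Xy (pspan2_lspan2 hab)).
have [c' [d' [[Fc' Xc' nWc'] [Fd' Xd' nWd'] hy]]] : exists c' d',
    [/\ [/\ F c', Xs i c' & ~ W c'], [/\ F d', Xs i d' & ~ W d'] & pspan2 c' d' y].
  case: hcd => [r [s [hr [hs ey]]]]; have [s0|s0] := eqVneq s 0.
    exists c, c; split=> //; rewrite ey s0 scale0r addr0; exact: pspan2_l.
  exists c, d; split=> //; last by exists r, s.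
  by case: ((fullF y c Fy Fc d).2 (conj (Xseg_Xset Xd) (lspan2_exchange s0 ey))).
have D e : F e -> Xs i e -> ~ W e ->
    Defs.setDP (fun v => F v /\ Xs i v) (fun v => W v /\ F v) e.
  by move=> Fe Xe nWe; split=> // -[].
apply: (cleanF _ (biclosed_inI F hW)).
  by apply: (pspan_pspan2 (a := a) (b := b)).
exact: (pspan_pspan2 (D c' Fc' Xc' nWc') (D d' Fd' Xd' nWd') hy).
Qed.

Lemma cone2_setD_swap k W a b g : biclosed_in (Xs k) W -> X a ->
  W b -> b <> 0 -> Xs k g -> ~ W g -> g <> 0 -> pspan2 a b g ->
  cone2 (Defs.setDP (Xs k) W) a.
Proof.
move=> hW Xa Wb b0 Xg nWg g0 hg; have [[WXs cW] _] := hW.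
have Xb := WXs b Wb.
have [/vlineP[l el]|ab] := boolP (a \in <[b]>%VS).
  have [s [t [hs [ht eg]]]] := hg.
  have {}eg : g = (s * l + t) *: b by rewrite eg el scalerA -scalerDl.
  have [K0|K0] := lerP 0 (s * l + t).
    by case: nWg; apply: (cW b b g Wb Wb Xg); rewrite eg; apply: pspan2_l.
  have l0 : l < 0.
    by rewrite ltNge; apply: contraTN K0 => l0; rewrite -leNgt addr_ge0 ?mulr_ge0.
  exists g, g; split=> //; have -> : a = (l / (s * l + t)) *: g.
    by rewrite eg scalerA mulfVK ?ltr0_neq0.
  by apply: pspan2_l; rewrite ler_ndivlMr // mul0r ltW.
have b0' : b != 0 by apply/eqP.
have hY := plane_lin2_subset Xa (Xseg_Xset Xb) b0' ab.
have [al [be hF]] := has_fund hY; have [_ [_ [Ycone _]]] := hF.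
have Yb : plane a b b by split; [apply: Xseg_Xset Xb | apply: lspan2_r].
have Yg : plane a b g by split; [apply: Xseg_Xset Xg | apply: pspan2_lspan2].
have bg : b <> g by move=> e; apply: nWg; rewrite -e.
have [Xal Xbe] := fundamental_seg hY hF Yb Yg bg Xb Xg.
have side e : Xs k e -> pspan2 e b g -> pspan2 e g a -> cone2 (Defs.setDP (Xs k) W) a.
  move=> Xe heg hea; exists e, g; split=> //; split=> // We.
  exact: nWg (cW e b g We Wb Xg heg).
have [[] | []] := pspan2_pivot b0 g0 (Ycone a (conj Xa (lspan2_l a b))) (Ycone b Yb) hg.
  exact: side.
exact: side.
Qed.

Lemma biclosed_extend_out k W : (forall v, Xs k.+1 v -> v <> 0) ->
  biclosed_in (Xs k) W -> (valid len k -> ~ cone2 W (gamma k)) -> biclosed_in (Xs k.+1) W.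
Proof.
move=> nz hW ncone; have [[WXs cW] [_ [_ cD]]] := hW.
have nzk v : Xs k v -> v <> 0 by move/(Xseg_mono (leqnSn k))/nz.
have WXs1 : Defs.subsetP W (Xs k.+1) by move=> v /WXs/(Xseg_mono (leqnSn k)).
split; first split=> // a b g Wa Wb /XsegS[Xg | [vk eg]] hg.
- exact: (cW _ _ _ Wa Wb Xg hg).
- by case: (ncone vk); rewrite -eg; exists a, b.
split=> //; split=> [v [] // | c1 c2 g [X1 nW1] [X2 nW2] Xg hg]; split=> // Wg.
have Xsg := WXs g Wg.
have swap c : Xs k c -> ~ W c -> valid len k -> pspan2 (gamma k) c g -> False.
  move=> Xc nWc vk hc; apply: (ncone vk); rewrite -(setDPK WXs).
  have Dc : Defs.setDP (Xs k) W c by [].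
  have nDg : ~ Defs.setDP (Xs k) W g by case.
  exact: (cone2_setD_swap (biclosed_setD hW) (Xset_gamma vk) Dc (nzk c Xc) Xsg nDg
            (nzk g Xsg) hc).
case/XsegS: X1 => [X1 | [vk e1]]; case/XsegS: X2 => [X2 | [vk' e2]].
- by case: (cD c1 c2 g (conj X1 nW1) (conj X2 nW2) Xsg hg).
- by apply: (swap c1 X1 nW1 vk'); rewrite -e2; apply: pspan2C.
- by apply: (swap c2 X2 nW2 vk); rewrite -e1.
- apply: (ncone vk); exists g, g; split=> //; apply: (pspan2_ray (nzk g Xsg)).
  by rewrite -{1}e1 -e2.
Qed.

Lemma biclosed_extend_in k W : (forall v, Xs k.+1 v -> v <> 0) ->
  biclosed_in (Xs k) W -> valid len k -> cone2 W (gamma k) ->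
  biclosed_in (Xs k.+1) (fun v => W v \/ v = gamma k).
Proof.
move=> nz hW vk hk; have [[WXs _] _] := hW.
have nD : valid len k -> ~ cone2 (Defs.setDP (Xs k) W) (gamma k).
  move=> _ hD; apply: (nz (gamma k)); first by apply/XsegS; right.
  exact: (cone2_setD_eq0 hW (Xset_gamma vk) hk hD).
have := biclosed_setD (biclosed_extend_out nz (biclosed_setD hW) nD).
congr biclosed_in; apply/funext => v; apply/propext; split.
  case=> /XsegS[Xv nDv | [_ ->] _]; last by right.
  by left; apply: contrapT => nWv; apply: nDv.
case=> [Wv | ->]; split.
- by apply/XsegS; left; apply: WXs.
- by case.
- by apply/XsegS; right.
- by case=> /(Xseg_index vk); rewrite ltnn.
Qed.

Definition extend W k : V -> Prop :=
  if pselect (valid len k /\ cone2 W (gamma k)) then (fun v => W v \/ v = gamma k) else W.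

Lemma biclosed_extend k W : (forall v, Xs k.+1 v -> v <> 0) ->
  biclosed_in (Xs k) W -> biclosed_in (Xs k.+1) (extend W k).
Proof.
rewrite /extend => nz hW; case: pselect => [[vk hk] | nP].
  exact: biclosed_extend_in.
by apply: biclosed_extend_out => // vk hk; apply: nP.
Qed.

Lemma extend_sub W k v : W v -> extend W k v.
Proof. by rewrite /extend; case: pselect => h Wv; [left |]. Qed.

Lemma extend_cases W k v : extend W k v -> W v \/ (valid len k /\ v = gamma k).
Proof. by rewrite /extend; case: pselect => [[vk _] [Wv | ->] | h Wv]; auto. Qed.

Fixpoint extension U m d : V -> Prop :=
  if d is d'.+1 then extend (extension U m d') (m + d') else U.

Lemma extension_biclosed U m d : biclosed_in (Xs m) U ->
  (forall v, Xs (m + d) v -> v <> 0) -> biclosed_in (Xs (m + d)) (extension U m d).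
Proof.
move=> hU; elim: d => [|d IH] nz; first by rewrite addn0.
rewrite addnS /=; apply: biclosed_extend; first by rewrite -addnS.
by apply: IH => v /(Xseg_mono (leqnSn _)); rewrite -addnS => /nz.
Qed.

Lemma extension_mono U m d d' v : (d <= d')%N -> extension U m d v -> extension U m d' v.
Proof.
elim: d' => [|d' IH]; first by rewrite leqn0 => /eqP ->.
by rewrite leq_eqVlt ltnS => /orP[/eqP -> // | /IH hd /hd]; apply: extend_sub.
Qed.

Lemma extension_seg U m d v : extension U m d v -> Xs m v -> U v.
Proof.
elim: d => [// | d IH] /= /extend_cases[/IH // | [vk ->]] /(Xseg_index vk).
by rewrite ltnNge leq_addr.
Qed.

Lemma closure_seg_nozero m U v : (forall j, valid len j -> gamma j <> 0) ->
  biclosed_in (Xs m) U -> closure_in X U v -> Xs m v -> U v.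
Proof.
move=> nz hU hv; suff [d] : exists d, extension U m d v by move/extension_seg.
have nzs k w : Xs k w -> w <> 0 by case=> j [vj [_ ->]]; apply: nz.
have ext d := extension_biclosed (d := d) hU (nzs _).
apply: (hv (fun w => exists d, extension U m d w)); last by move=> u Uu; exists 0%N.
split=> [w [d Ew] | a b g [d1 ha] [d2 hb] [j [vj eg]] hg].
  exact: Xseg_Xset ((ext d).1.1 w Ew).
exists (d1 + d2 + j.+1)%N; apply: ((ext _).1.2 a b).
- by apply: extension_mono ha; rewrite -addnA leq_addr.
- by apply: extension_mono hb; rewrite addnAC leq_addl.
- by exists j; split=> //; split=> //; lia.
- exact: hg.
Qed.

Definition planar := exists a0 b0 : V, forall v, X v -> v \in lspan2 a0 b0.

Section Zero.
Variable z : nat.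
Hypotheses (vz : valid len z) (gz : gamma z = 0).

Definition after v := exists j, [/\ valid len j, (z < j)%N & v = gamma j].

Lemma Xseg_neq0 v : Xs z v -> v <> 0.
Proof.
case=> j [vj [jz ->]]; rewrite -gz => /(gamma_inj vj vz) ejz.
by move: jz; rewrite ejz ltnn.
Qed.

Lemma after_neq0 v : after v -> v <> 0.
Proof.
case=> j [vj zj ->]; rewrite -gz => /(gamma_inj vj vz) ejz.
by move: zj; rewrite ejz ltnn.
Qed.

Lemma after_X v : after v -> X v.
Proof. by case=> j [vj _ ->]; exists j. Qed.

Lemma after_notXseg v : after v -> ~ Xs z v.
Proof. by case=> j [vj zj ->] /(Xseg_index vj); rewrite ltnNge ltnW. Qed.

Lemma Xset_cases v : X v -> [\/ Xs z v, v = 0 | after v].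
Proof.
case=> j [vj ->]; case: (ltngtP j z) => [jz | zj | ->].
- by constructor 1; exists j.
- by constructor 3; exists j.
- by constructor 2.
Qed.

Lemma fundamental_before_zero Y al be : lin2_subset X Y -> fundamental Y al be ->
  Xs z al /\ Xs z be.
Proof.
move=> hY hF; have [al0 be0] := fundamental_neq0 hF.
have [a [b [_ [_ [_ Yab]]]]] := hY.
apply: (fundamental_before hY hF vz); rewrite gz; try by move/esym.
by apply/Yab; split; [rewrite -gz; apply: Xset_gamma | apply: mem0v].
Qed.

Lemma after_fundamental_gt0 Y al be g : lin2_subset X Y -> fundamental Y al be ->
  Y g -> after g -> exists s t : R, [/\ 0 < s, 0 < t & g = s *: al + t *: be].
Proof.
move=> hY hF Yg Ag; have [Xal Xbe] := fundamental_before_zero hY hF.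
apply: (fundamental_gt0 hF Yg (after_neq0 Ag)) => e;
  by apply: (after_notXseg Ag); rewrite e.
Qed.

Lemma after_separates (phi : {scalar V}) x w : after w -> X x ->
  phi w = 0 -> phi x != 0 -> exists y1 y2,
  [/\ Xs z y1, Xs z y2, y1 \in lspan2 x w, y2 \in lspan2 x w & phi y1 < 0 < phi y2].
Proof.
move=> Aw Xx phiw phix; have w0 : w != 0 by apply/eqP/after_neq0.
have hY := plane_lin2_subset Xx (after_X Aw) w0 (notin_vline_scalar phiw phix).
have [al [be hF]] := has_fund hY; have [[_ Lal] [[_ Lbe] [Ycone _]]] := hF.
have [Xal Xbe] := fundamental_before_zero hY hF.
have Yw : plane x w w by split; [apply: after_X | apply: lspan2_r].
have [s [t [hs ht ew]]] := after_fundamental_gt0 hY hF Yw Aw.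
have rel : s * phi al + t * phi be = 0 by rewrite -scalar_lin2 -ew.
have al0 : phi al != 0.
  apply: contraNneq phix => al0; move: rel; rewrite al0 mulr0 add0r => /eqP.
  rewrite mulf_eq0 gt_eqF //= => /eqP be0.
  have [s' [t' [_ [_ ->]]]] := Ycone x (conj Xx (lspan2_l x w)).
  by rewrite scalar_lin2 al0 be0 !mulr0 addr0.
by case: (opposite_signs hs ht rel al0) => ?; [exists al, be | exists be, al].
Qed.

Lemma after_plane g1 g2 : after g1 -> after g2 -> g2 \notin <[g1]>%VS ->
  forall q, X q -> q \in lspan2 g1 g2.
Proof.
move=> A1 A2 g21 q Xq; apply: contrapT => /negP q12.
have g10 : g1 != 0 by apply/eqP/after_neq0.
have g20 : g2 != 0 by apply/eqP/after_neq0.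
have [h [t [hq hg1 hg2 tg1 tg2]]] := lspan2_dual g10 g21 q12.
(* [p] minimises [t / h] over [X_z] on the side [0 < h]; the planes through
   [g2] and then [g1] yield a vector of [X_z] with a smaller ratio. *)
have [p [Xp hp pmin]] : exists p, [/\ Xs z p, 0 < h p &
    forall p', Xs z p' -> 0 < h p' -> t p / h p <= t p' / h p'].
  have hq0 : h q != 0 by rewrite hq oner_neq0.
  have [_ [p0 [_ Xp0 _ _ /andP[_ hp0]]]] := after_separates A1 Xq hg1 hq0.
  have hp0' : [pred v | 0 < h v] p0 by [].
  have [p [Xp /= hp pmin]] := Xseg_argmin (fun v => t v / h v) (ex_intro2 _ _ p0 Xp0 hp0').
  by exists p; split=> // p' Xp' hp'; apply: pmin.
have [r [_ [Xr _ rpg _ /andP[hr _]]]] :=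
  after_separates A2 (Xseg_Xset Xp) hg2 (lt0r_neq0 hp).
have [mu [nu er]] := lspan2_comb rpg.
have hr' : h r = mu * h p by rewrite er scalar_lin2 hg2 mulr0 addr0.
have tr : t r = mu * t p + nu by rewrite er scalar_lin2 tg2 mulr1.
have mu0 : mu < 0 by move: hr; rewrite hr' pmulr_llt0.
have nu0 : 0 < nu.
  rewrite ltNge; apply/negP => nu0; apply: (Xseg_neq0 Xr).
  apply: (plane_pspan2_opp (Xseg_Xset Xp) (after_X A2) g20 _ (Xseg_Xset Xr) rpg).
    exact: notin_vline_scalar hg2 (lt0r_neq0 hp).
  by rewrite er opprD -!scaleNr; apply: pspan2E; rewrite oppr_ge0 // ltW.
have [_ [p2 [_ Xp2 _ p2rg /andP[_ hp2]]]] :=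
  after_separates A1 (Xseg_Xset Xr) hg1 (ltr0_neq0 hr).
have [mu' [nu' ep2]] := lspan2_comb p2rg.
have hp2' : h p2 = mu' * h r by rewrite ep2 scalar_lin2 hg1 mulr0 addr0.
have tp2 : t p2 = mu' * t r by rewrite ep2 scalar_lin2 tg1 mulr0 addr0.
have mu'0 : mu' != 0 by apply: contraTneq hp2 => mu'0; rewrite hp2' mu'0 mul0r ltxx.
have := pmin p2 Xp2 hp2; rewrite hp2' tp2 -mulf_div divff // mul1r tr hr'.
by rewrite leNgt ratio_shift_lt.
Qed.

Lemma after_ray g1 g2 : ~ planar -> after g1 -> after g2 -> exists2 l, 0 < l & g2 = l *: g1.
Proof.
move=> nplanar A1 A2; have g10 : g1 != 0 by apply/eqP/after_neq0.
have [/vlineP[l el]|g21] := boolP (g2 \in <[g1]>%VS); last first.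
  by case: nplanar; exists g1, g2; apply: after_plane.
exists l => //; rewrite ltNge; apply/negP => l0.
have [w Xw w1] : exists2 w, X w & w \notin <[g1]>%VS.
  apply: contrapT => nw; apply: nplanar; exists g1, g1 => v Xv.
  by rewrite /lspan2 addvv; apply: contrapT => /negP nv; apply: nw; exists v.
apply: (after_neq0 A2); apply: (plane_pspan2_opp Xw (after_X A1) g10 w1 (after_X A2)).
  by rewrite el; have := memv_lspan2 w g1 0 l; rewrite scale0r add0r.
by rewrite el -scaleNr; apply: pspan2C; apply: pspan2_l; rewrite oppr_ge0.
Qed.

Lemma after_pspan2 a b g : ~ planar -> after a -> after b -> pspan2 a b g -> pspan2 a a g.
Proof.
move=> nplanar Aa Ab [s [t [hs [ht ->]]]]; have [l l0 ->] := after_ray nplanar Aa Ab.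
by rewrite scalerA -scalerDl; apply: pspan2_l; rewrite addr_ge0 ?mulr_ge0 ?(ltW l0).
Qed.

Lemma after_cone2 W a b g : biclosed_in (Xs z) W -> after a -> cone2 W a ->
  W b -> Xs z g -> ~ W g -> pspan2 a b g -> False.
Proof.
move=> hW Aa ca Wb Xg nWg hg; have [[WXs _] _] := hW.
apply: (after_neq0 Aa); apply: (cone2_setD_eq0 hW (after_X Aa) ca).
have b0 := Xseg_neq0 (WXs b Wb).
exact: (cone2_setD_swap hW (after_X Aa) Wb b0 Xg nWg (Xseg_neq0 Xg) hg).
Qed.

Definition zero_hull W v := [\/ W v, v = 0 | after v /\ cone2 W v].

Lemma zero_hull_closed W : ~ planar -> biclosed_in (Xs z) W -> closed_in X (zero_hull W).
Proof.
move=> nplanar hW; have [[WXs cW] _] := hW.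
split=> [v [/WXs/Xseg_Xset | -> | [/after_X]] // | a b g Ha Hb Xg hg].
  by rewrite -gz; apply: Xset_gamma.
suff : g = 0 \/ cone2 W g.
  case=> [-> | cg]; first by constructor 2.
  case: (Xset_cases Xg) => [Xsg | -> | Ag]; last by constructor 3.
    by constructor 1; apply: closed_in_cone2 (conj WXs cW) Xsg cg.
  by constructor 2.
have hull_cone2 v : zero_hull W v -> v = 0 \/ cone2 W v.
  by case=> [/cone2_sub | | []]; auto.
have ray v : zero_hull W v -> pspan2 v v g -> g = 0 \/ cone2 W g.
  move=> /hull_cone2[-> [s [t [_ [_ ->]]]] | cv hv]; first by left; rewrite !scaler0 addr0.
  by right; apply: cone2_ray cv hv.
have mixed a' b' : after a' -> cone2 W a' -> W b' -> pspan2 a' b' g -> g = 0 \/ cone2 W g.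
  move=> Aa ca Wb hab; case: (Xset_cases Xg) => [Xsg | -> | Ag]; [right | by left | right].
    apply: cone2_sub; apply: contrapT => nWg.
    exact: (after_cone2 hW Aa ca Wb Xsg nWg hab).
  by have [l l0 ->] := after_ray nplanar Aa Ag; apply: cone2Z ca; apply: ltW.
have [a0|a0] := pselect (a = 0).
  by apply: (ray b Hb); apply: pspan2_0r; apply: pspan2C; rewrite -a0.
have [b0|b0] := pselect (b = 0).
  by apply: (ray a Ha); apply: pspan2_0r; rewrite -b0.
case: Ha => [Wa | // | [Aa ca]]; case: Hb => [Wb | // | [Ab cb]].
- by right; exists a, b.
- by apply: (mixed b a Ab cb Wa); apply: pspan2C.
- exact: (mixed a b Aa ca Wb hg).
- exact: (ray a (Or33 _ _ (conj Aa ca)) (after_pspan2 nplanar Aa Ab hg)).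
Qed.

Lemma closure_seg_zero_before m U v : (z < m)%N ->
  biclosed_in (Xs m) U -> closure_in X U v -> Xs m v -> U v.
Proof.
move=> zm hU hv Xv; have Xs0 : Xs m 0 by exists z.
case: (biclosed_in_0 hU Xs0) => [noU | allU]; last exact: allU.
by case: (closure_in_empty noU hv).
Qed.

Lemma closure_seg_zero_after m U v : ~ planar -> (m <= z)%N ->
  biclosed_in (Xs m) U -> closure_in X U v -> Xs m v -> U v.
Proof.
move=> nplanar mz hU hv Xv; pose W := extension U m (z - m).
have hW : biclosed_in (Xs z) W.
  have := extension_biclosed (d := z - m) hU; rewrite subnKC //.
  by apply; apply: Xseg_neq0.
have [/extension_seg/(_ Xv) // | v0 | [Av _]] : zero_hull W v.
  apply: (hv _ (zero_hull_closed nplanar hW)) => u Uu; constructor 1.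
  exact: (extension_mono (d := 0) (leq0n _) Uu).
- by case: (Xseg_neq0 (Xseg_mono mz Xv)).
- by case: (after_notXseg Av (Xseg_mono mz Xv)).
Qed.

End Zero.

End Ordering.

Theorem proposition3p2 (R : realType) (n : nat)
  (gamma : nat -> 'rV[R]_n) (len : option nat)
  (gamma_inj : forall i j, valid len i -> valid len j -> gamma i = gamma j -> i = j)
  (has_fund : forall Y, lin2_subset (Xset gamma len) Y -> exists a b, fundamental Y a b)
  (suit : suitable gamma len)
  (m : nat) (U : 'rV[R]_n -> Prop)
  (hU : biclosed_in (Xseg gamma len m) U) :
  forall v, (closure_in (Xset gamma len) U v /\ Xseg gamma len m v) <-> U v.
Proof.
move=> v; split=> [[hv Xv] | Uv]; last by split; [apply: closure_in_sub | apply: hU.1.1].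
have [[z [vz gz]] | nz] := pselect (exists z, valid len z /\ gamma z = 0); last first.
  apply: (closure_seg_nozero gamma_inj has_fund suit _ hU hv Xv) => j vj gj.
  by apply: nz; exists j.
have [zm | mz] := ltnP z m; first exact: (closure_seg_zero_before vz gz zm hU hv Xv).
have [[a0 [b0 Xplane]] | nplanar] := pselect (planar gamma len).
  exact: (closure_in_lspan2 Xplane (@Xseg_Xset _ _ _ _ m) hU.1 hv Xv).
exact: (closure_seg_zero_after gamma_inj has_fund suit vz gz nplanar mz hU hv Xv).
Qed.
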